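(* Let $B\subseteq A$ be a Frobenius extension of rings whose Frobenius homomorphism $E:A\to B$ is surjective, and let $P$ be a progenerator right $A$-module. Then the natural inclusion $\mathrm{End}\,P_A\hookrightarrow\mathrm{End}\,P_B$ is a Frobenius extension.
   Context: A ring extension $B\subseteq A$ is a Frobenius extension if $A_B$ is finitely generated projective and there is a $B$-$B$-bimodule map $E:A\to B$ (the Frobenius homomorphism) and elements $x_i,y_i\in A$ with $\sum_iE(ax_i)y_i=a=\sum_ix_iE(y_ia)$ for all $a\in A$. A progenerator is a finitely generated projective generator. $\mathrm{End}\,P_B$ denotes endomorphisms of $P$ regarded as a right $B$-module by restriction. *)

From HB Require Import structures.
From mathcomp Require Import all_boot all_order all_algebra.
Set Implicit Arguments. Unset Strict Implicit. Unset Printing Implicit Defensive.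
Import GRing.Theory.
Local Open Scope ring_scope.

(* Frobenius extensions, stated for a "big" ring sitting inside a carrier S *)
(* with addition [add], multiplication [mul] and zero [zero]; the big ring  *)
(* is the subset [Big] of S and the subring is the subset [Small] of S.     *)
(* This raw form is needed because End P_B is not a MathComp ringType; it   *)
(* is used uniformly both for B ⊆ A and for End P_A ⊆ End P_B.              *)
Section FrobeniusExt.
Variables (S : Type) (add mul : S -> S -> S) (zero : S) (Big Small : S -> Prop).

Definition small_vec n (v : 'I_n -> S) := forall i, Small (v i).

(* Big, as a right Small-module (via mul), is finitely generated projective:
   a direct summand (retract) of a free module Small^n of finite rank. *)
Definition fgproj_right : Prop :=
  exists n (p : S -> 'I_n -> S) (s : ('I_n -> S) -> S),
  [/\ forall a, Big a -> small_vec (p a),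
      forall a a', Big a -> Big a' -> forall i, p (add a a') i = add (p a i) (p a' i)
    & forall a t, Big a -> Small t -> forall i, p (mul a t) i = mul (p a i) t] /\
  [/\ forall v, small_vec v -> Big (s v),
      forall v w, small_vec v -> small_vec w ->
        s (fun i => add (v i) (w i)) = add (s v) (s w)
    & forall v t, small_vec v -> Small t -> s (fun i => mul (v i) t) = mul (s v) t] /\
  (forall a, Big a -> s (p a) = a).

Definition frobenius_system (E : S -> S) : Prop :=
  [/\ forall a, Big a -> Small (E a),
      forall a a', Big a -> Big a' -> E (add a a') = add (E a) (E a'),
      forall b a, Small b -> Big a -> E (mul b a) = mul b (E a),
      forall a b, Big a -> Small b -> E (mul a b) = mul (E a) b
    & exists n (x y : 'I_n -> S), (forall i, Big (x i) /\ Big (y i)) /\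
        forall a, Big a ->
          \big[add/zero]_(i < n) mul (E (mul a (x i))) (y i) = a /\
          \big[add/zero]_(i < n) mul (x i) (E (mul (y i) a)) = a].

Definition frobenius_ext : Prop := fgproj_right /\ exists E, frobenius_system E.

Definition frobenius_ext_surj : Prop :=
  fgproj_right /\ exists E, frobenius_system E /\
    forall b, Small b -> exists a, Big a /\ E a = b.

End FrobeniusExt.

(* Right modules over a ring R are left modules over the converse ring R^c: *)
(* for x : P and a : R, the right action x·a is written (a : R^c) *: x.    *)
(* The free right module R^n is 'rV[R^c]_n (entrywise right mult.).        *)
Section RightModules.
Variable R : pzRingType.

Definition rlinear (M N : lmodType R^c) (f : M -> N) : Prop :=
  (forall x y, f (x + y) = f x + f y) /\ (forall (a : R^c) x, f (a *: x) = a *: f x).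

Definition fg_projective (P : lmodType R^c) : Prop :=
  exists n (p : P -> 'rV[R^c]_n) (s : 'rV[R^c]_n -> P),
    [/\ rlinear p, rlinear s & cancel p s].

Definition generator (P : lmodType R^c) : Prop :=
  exists n (f : 'I_n -> P -> 'rV[R^c]_1),
    (forall i, rlinear (f i)) /\
    forall r : 'rV[R^c]_1, exists xs : 'I_n -> P, \sum_(i < n) f i (xs i) = r.

Definition progenerator (P : lmodType R^c) : Prop := fg_projective P /\ generator P.

(* The ring End P_C of additive maps P -> P commuting with the right action
   of the elements of C ⊆ R, inside the carrier P -> P, with pointwise
   addition and composition as product. *)
Definition endo_add (P : lmodType R^c) (f g : P -> P) : P -> P := fun x => f x + g x.
Definition endo_mul (P : lmodType R^c) (f g : P -> P) : P -> P := fun x => f (g x).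
Definition endo_zero (P : lmodType R^c) : P -> P := fun _ => 0.
Definition End_over (P : lmodType R^c) (C : R -> Prop) (f : P -> P) : Prop :=
  (forall x y, f (x + y) = f x + f y) /\
  (forall (a : R), C a -> forall x : P, f ((a : R^c) *: x) = (a : R^c) *: f x).

End RightModules.

From HB Require Import structures.
From mathcomp Require Import all_boot all_order all_algebra.
From Stdlib Require Import FunctionalExtensionality.
Set Implicit Arguments. Unset Strict Implicit. Unset Printing Implicit Defensive.
Import GRing.Theory.
Local Open Scope ring_scope.

(* For f in End P_B put E_P(f)(u) = sum_i f(u x_i) y_i, where (x_i, y_i) are dual
   bases of E.  Expanding scalars through these dual bases shows that E_P takes
   values in End P_A and is an End P_A-bimodule map.  Since P_A is projective it
   has a dual basis (p_j, phi_j), and since it is a generator there are q_l in P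
   and A-linear psi_l : P -> A with sum_l psi_l(q_l) = 1; then
     X_jkl = p_j . x_k E(psi_l(-))   and   Y_jkl = q_l . E(y_k phi_j(-))
   are dual bases for E_P.  As for any Frobenius system, the dual bases also make
   End P_B finitely generated projective over End P_A. *)

Lemma additive_sum (M N : zmodType) (f : M -> N) : {morph f : u v / u + v} ->
  forall (I : Type) r (Q : pred I) F, f (\sum_(i <- r | Q i) F i) = \sum_(i <- r | Q i) f (F i).
Proof.
move=> fD I r Q F; have f0 : f 0 = 0 by apply: (addrI (f 0)); rewrite -fD !addr0.
exact: (big_morph f fD f0).
Qed.

Lemma sum_triple (V : nmodType) (I J K : finType) (F : I * J * K -> V) :
  \sum_t F t = \sum_i \sum_j \sum_k F (i, j, k).
Proof.
rewrite (pair_bigA _ (fun i j => \sum_k F (i, j, k))) pair_bigA.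
by apply: eq_bigr => -[[]].
Qed.

Lemma sum_enum_val (V : nmodType) (T : finType) (F : T -> V) :
  \sum_(i < #|T|) F (enum_val i) = \sum_t F t.
Proof. by rewrite -big_enum_val. Qed.

Section RightModule.
Variables (A : pzRingType) (P : lmodType A^c).

Definition ract (u : P) (a : A) : P := (a : A^c) *: u.

Lemma ractDl u v a : ract (u + v) a = ract u a + ract v a.
Proof. exact: scalerDr. Qed.

Lemma ractDr u a b : ract u (a + b) = ract u a + ract u b.
Proof. exact: scalerDl. Qed.

Lemma ractA u a b : ract (ract u a) b = ract u (a * b).
Proof. by rewrite /ract scalerA. Qed.

Lemma ract1 u : ract u 1 = u.
Proof. exact: scale1r. Qed.

Lemma ract_suml I r (Q : pred I) (F : I -> P) a :
  ract (\sum_(i <- r | Q i) F i) a = \sum_(i <- r | Q i) ract (F i) a.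
Proof. exact: scaler_sumr. Qed.

Lemma ract_sumr u I r (Q : pred I) (F : I -> A) :
  ract u (\sum_(i <- r | Q i) F i) = \sum_(i <- r | Q i) ract u (F i).
Proof. exact: scaler_suml. Qed.

Implicit Types (C : A -> Prop) (f g : P -> P).

Lemma End_overD C f : End_over C f -> {morph f : u v / u + v}.
Proof. exact: proj1. Qed.

Lemma End_overZ C f : End_over C f -> forall u a, C a -> f (ract u a) = ract (f u) a.
Proof. by move=> [_ fZ] u a Ca; apply: fZ. Qed.

Lemma End_over_sum C f : End_over C f -> forall I r (Q : pred I) F,
  f (\sum_(i <- r | Q i) F i) = \sum_(i <- r | Q i) f (F i).
Proof. by move/End_overD/additive_sum. Qed.

Lemma End_over_sub C C' f : (forall a, C a -> C' a) -> End_over C' f -> End_over C f.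
Proof. by move=> sCC' [fD fZ]; split=> // a /sCC'/fZ. Qed.

Lemma End_over0 C : End_over C (@endo_zero A P).
Proof. by split=> [u v | a _ u]; rewrite /endo_zero ?addr0 // scaler0. Qed.

Lemma End_over_add C f g : End_over C f -> End_over C g -> End_over C (endo_add f g).
Proof.
move=> [fD fZ] [gD gZ]; split=> [u v | a Ca u]; rewrite /endo_add.
  by rewrite fD gD addrACA.
by rewrite fZ // gZ // scalerDr.
Qed.

Lemma End_over_mul C f g : End_over C f -> End_over C g -> End_over C (endo_mul f g).
Proof.
move=> [fD fZ] [gD gZ]; split=> [u v | a Ca u]; rewrite /endo_mul.
  by rewrite gD fD.
by rewrite gZ // fZ.
Qed.

Lemma endo_sumE I r (Q : pred I) (F : I -> P -> P) u :
  (\big[@endo_add A P/@endo_zero A P]_(i <- r | Q i) F i) u = \sum_(i <- r | Q i) F i u.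
Proof. by apply: (big_rec2 (fun f s => f u = s)) => // i f s _ <-. Qed.

Lemma endo_addE f g u : endo_add f g u = f u + g u.
Proof. by []. Qed.

Lemma End_over_big C I r (Q : pred I) (F : I -> P -> P) :
  (forall i, Q i -> End_over C (F i)) ->
  End_over C (\big[@endo_add A P/@endo_zero A P]_(i <- r | Q i) F i).
Proof. by move=> FC; apply: big_ind => //; [exact: End_over0 | exact: End_over_add]. Qed.

Definition form_over C (lam : P -> A) : Prop :=
  {morph lam : u v / u + v} /\ forall a u, C a -> lam (ract u a) = lam u * a.

Definition rank1 (w : P) (lam : P -> A) : P -> P := fun u => ract w (lam u).

Lemma form_over_mull C lam c : form_over C lam -> form_over C (fun u => c * lam u).
Proof. by case=> lD lZ; split=> [u v | a u Ca]; rewrite ?lD ?mulrDr // lZ // mulrA. Qed.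

Lemma End_over_rank1 C w lam : form_over C lam -> End_over C (rank1 w lam).
Proof.
by case=> lD lZ; split=> [u v | a Ca u]; rewrite /rank1 ?lD ?ractDr // lZ // -ractA.
Qed.

Lemma fg_projective_dual_basis : fg_projective P ->
  exists m (pj : 'I_m -> P) (phi : 'I_m -> P -> A),
    (forall j, form_over (fun _ => True) (phi j)) /\
    forall u, \sum_j ract (pj j) (phi j u) = u.
Proof.
case=> m [p [s [[pD pZ] [sD sZ] pK]]].
exists m, (fun j => s (delta_mx 0 j)), (fun j u => p u 0 j); split.
  by move=> j; split=> [u v | a u _]; rewrite /ract ?pD ?pZ mxE.
move=> u; rewrite -{2}(pK u) {2}[p u]row_sum_delta.
by rewrite (additive_sum sD); apply: eq_bigr => j _; rewrite sZ.
Qed.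

Lemma generator_trace_one : generator P ->
  exists L (q : 'I_L -> P) (psi : 'I_L -> P -> A),
    (forall l, form_over (fun _ => True) (psi l)) /\ \sum_l psi l (q l) = 1.
Proof.
case=> L [g [gL gen]]; have [q qE] := gen (const_mx 1).
exists L, q, (fun l u => g l u 0 0); split.
  by move=> l; split=> [u v | a u _]; rewrite /ract ?(gL l).1 ?(gL l).2 mxE.
by rewrite -summxE qE mxE.
Qed.

Lemma End_fgproj_of_frobenius_system C E :
  frobenius_system (@endo_add A P) (@endo_mul A P) (@endo_zero A P)
    (End_over C) (End_over (fun _ => True)) E ->
  fgproj_right (@endo_add A P) (@endo_mul A P)
    (End_over C) (End_over (fun _ => True)).
Proof.
case=> EA ED _ EBr [n [x [y [xyC dual]]]].
exists n, (fun f i => E (endo_mul (y i) f)),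
  (fun v => \big[@endo_add A P/@endo_zero A P]_(i < n) endo_mul (x i) (v i)).
split; [split | split; [split |]].
- by move=> f fC i; apply: EA; apply: End_over_mul (xyC i).2 fC.
- move=> f g fC gC i; rewrite -ED; [|exact: End_over_mul (xyC i).2 _ ..].
  by congr E; apply: functional_extensionality => u; apply: (End_overD (xyC i).2).
- by move=> f t fC tA i; rewrite -EBr //; apply: End_over_mul (xyC i).2 fC.
- move=> v vA; apply: End_over_big => i _; apply: End_over_mul (xyC i).1 _.
  by apply: End_over_sub (vA i).
- move=> v w _ _; apply: functional_extensionality => u.
  rewrite endo_addE !endo_sumE -big_split; apply: eq_bigr => i _.
  exact: (End_overD (xyC i).1).
- by move=> v t _ _; apply: functional_extensionality => u; rewrite /endo_mul !endo_sumE.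
- by move=> f fC; apply: (dual f fC).2.
Qed.

End RightModule.

Section FrobeniusEndomorphisms.
Variables (A : pzRingType) (B : {pred A}) (E : A -> A) (n : nat) (x y : 'I_n -> A).
Hypotheses (EB : forall a, E a \in B) (ED : {morph E : a b / a + b})
  (EBl : forall b a, b \in B -> E (b * a) = b * E a)
  (EBr : forall a b, b \in B -> E (a * b) = E a * b)
  (dual_l : forall a, \sum_i E (a * x i) * y i = a)
  (dual_r : forall a, \sum_i x i * E (y i * a) = a).
Variable P : lmodType A^c.
Local Notation End_B := (@End_over A P (fun a => a \in B)).
Local Notation End_A := (@End_over A P (fun _ => True)).
Implicit Types (f g : P -> P) (w : P) (lam mu : P -> A).

Definition frob_endo f : P -> P := fun u => \sum_i ract (f (ract u (x i))) (y i).

(* Expand [a * x i] by [dual_r], then collapse the sum over [i] by [dual_l]. *)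
Lemma frob_endoZ f u a : End_B f -> frob_endo f (ract u a) = ract (frob_endo f u) a.
Proof.
move=> fB; rewrite /frob_endo ract_suml.
transitivity (\sum_i \sum_j ract (f (ract u (x j))) (E (y j * (a * x i)) * y i)).
  apply: eq_bigr => i _.
  rewrite ractA -{1}[a * x i]dual_r ract_sumr (End_over_sum fB) ract_suml.
  by apply: eq_bigr => j _; rewrite -ractA (End_overZ fB) ?EB // ractA.
rewrite exchange_big; apply: eq_bigr => j _ /=.
rewrite -ract_sumr ractA -[y j * a]dual_l; congr ract.
by apply: eq_bigr => i _; rewrite mulrA.
Qed.

Lemma frob_endo_End f : End_B f -> End_A (frob_endo f).
Proof.
move=> fB; split=> [u v | a _ u]; last exact: frob_endoZ.
rewrite /frob_endo -big_split; apply: eq_bigr => i _.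
by rewrite ractDl (End_overD fB) ractDl.
Qed.

Lemma frob_endo_add f g : frob_endo (endo_add f g) = endo_add (frob_endo f) (frob_endo g).
Proof.
apply: functional_extensionality => u; rewrite /frob_endo endo_addE -big_split.
by apply: eq_bigr => i _; rewrite ractDl.
Qed.

Lemma frob_endo_mull g f : End_A g -> frob_endo (endo_mul g f) = endo_mul g (frob_endo f).
Proof.
move=> gA; apply: functional_extensionality => u.
rewrite /frob_endo /endo_mul (End_over_sum gA).
by apply: eq_bigr => i _; rewrite (End_overZ gA).
Qed.

Lemma frob_endo_mulr f g : End_A g -> frob_endo (endo_mul f g) = endo_mul (frob_endo f) g.
Proof.
move=> gA; apply: functional_extensionality => u.
by rewrite /frob_endo /endo_mul; apply: eq_bigr => i _; rewrite (End_overZ gA).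
Qed.

Lemma form_over_E lam :
  form_over (fun _ => True) lam -> form_over (fun b => b \in B) (fun u => E (lam u)).
Proof. by case=> lD lZ; split=> [u v | b u Bb]; rewrite ?lD ?ED // lZ // EBr. Qed.

Lemma frob_endo_rank1 f lam : End_B f -> form_over (fun _ => True) lam -> forall w a,
  frob_endo (endo_mul f (rank1 w (fun u => a * E (lam u)))) = rank1 (f (ract w a)) lam.
Proof.
move=> fB [_ lZ] w a; apply: functional_extensionality => u.
rewrite /frob_endo /endo_mul /rank1 -[lam u]dual_l ract_sumr; apply: eq_bigr => i _.
by rewrite lZ // -ractA (End_overZ fB) ?EB // ractA.
Qed.

Lemma frob_endo_mul_rank1 w mu f :
  frob_endo (endo_mul (rank1 w mu) f) = rank1 w (fun v => \sum_i mu (f (ract v (x i))) * y i).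
Proof.
apply: functional_extensionality => v; rewrite /frob_endo /endo_mul /rank1 ract_sumr.
by apply: eq_bigr => i _; rewrite ractA.
Qed.

Lemma sum_x_Ey : \sum_i x i * E (y i) = 1.
Proof. by rewrite -[RHS]dual_r; apply: eq_bigr => i _; rewrite mulr1. Qed.

Variables (m L : nat) (pj : 'I_m -> P) (phi : 'I_m -> P -> A).
Variables (q : 'I_L -> P) (psi : 'I_L -> P -> A).
Hypotheses (phi_form : forall j, form_over (fun _ => True) (phi j))
  (psi_form : forall l, form_over (fun _ => True) (psi l))
  (dual_P : forall u, \sum_j ract (pj j) (phi j u) = u)
  (trace1 : \sum_l psi l (q l) = 1).

Local Notation T := ('I_m * 'I_n * 'I_L)%type.

Definition frob_dual_x (t : T) : P -> P :=
  rank1 (pj t.1.1) (fun u => x t.1.2 * E (psi t.2 u)).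

Definition frob_dual_y (t : T) : P -> P :=
  rank1 (q t.2) (fun u => E (y t.1.2 * phi t.1.1 u)).

Lemma End_frob_dual_x t : End_B (frob_dual_x t).
Proof. exact/End_over_rank1/form_over_mull/form_over_E. Qed.

Lemma End_frob_dual_y t : End_B (frob_dual_y t).
Proof. exact/End_over_rank1/form_over_E/form_over_mull. Qed.

Lemma frob_dual_l f : End_B f ->
  forall u, \sum_t frob_endo (endo_mul f (frob_dual_x t)) (frob_dual_y t u) = f u.
Proof.
move=> fB u; rewrite sum_triple -{2}[u]dual_P (End_over_sum fB).
apply: eq_bigr => j _; rewrite -[phi j u]dual_r ract_sumr (End_over_sum fB).
apply: eq_bigr => k _.
under eq_bigr => l _ do
  rewrite /frob_dual_x /= (frob_endo_rank1 fB (psi_form l)) /rank1 /= (psi_form l).2 //.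
by rewrite /= -ract_sumr -mulr_suml trace1 mul1r -ractA [RHS](End_overZ fB) ?EB.
Qed.

(* Both sides reduce to sum_j p_j . sum_i phi_j(f(v x_i)) E(y_i), using
   sum_i x_i E(y_i) = 1 on the right and sum_l psi_l(q_l) = 1 on the left. *)
Lemma frob_dual_r f : End_B f ->
  forall v, \sum_t frob_dual_x t (frob_endo (endo_mul (frob_dual_y t) f) v) = f v.
Proof.
move=> fB v; pose d j i := phi j (f (ract v (x i))).
have -> : f v = \sum_j ract (pj j) (\sum_i d j i * E (y i)).
  rewrite -{1}[v]ract1 -sum_x_Ey ract_sumr (End_over_sum fB).
  transitivity (\sum_i \sum_j ract (ract (pj j) (d j i)) (E (y i))).
    by apply: eq_bigr => i _; rewrite -ract_suml dual_P -ractA (End_overZ fB) ?EB.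
  rewrite exchange_big; apply: eq_bigr => j _ /=.
  by rewrite ract_sumr; apply: eq_bigr => i _; rewrite ractA.
rewrite sum_triple; apply: eq_bigr => j _.
transitivity (\sum_k ract (pj j) (x k * \sum_i E (y k * d j i) * E (y i))).
  apply: eq_bigr => k _.
  under eq_bigr => l _ do
    rewrite /frob_dual_y frob_endo_mul_rank1 /frob_dual_x /rank1 /= (psi_form l).2 //.
  rewrite -ract_sumr -mulr_sumr -(additive_sum ED) -mulr_suml trace1 mul1r (additive_sum ED).
  by congr (ract _ (_ * _)); apply: eq_bigr => i _; rewrite EBl ?EB.
rewrite -ract_sumr; congr ract.
under eq_bigr => k _ do rewrite mulr_sumr.
rewrite exchange_big; apply: eq_bigr => i _ /=.
by rewrite -[in RHS](dual_r (d j i)) mulr_suml; apply: eq_bigr => k _; rewrite mulrA.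
Qed.

Lemma End_frobenius_system :
  frobenius_system (@endo_add A P) (@endo_mul A P) (@endo_zero A P) End_B End_A frob_endo.
Proof.
split=> [f fB | f g _ _ | g f gA _ | f g _ gA |].
- exact: frob_endo_End.
- exact: frob_endo_add.
- exact: frob_endo_mull.
- exact: frob_endo_mulr.
exists #|{: T}|, (frob_dual_x \o enum_val), (frob_dual_y \o enum_val); split.
  by move=> i; split; [exact: End_frob_dual_x | exact: End_frob_dual_y].
move=> f fB; split; apply: functional_extensionality => u; rewrite endo_sumE.
  exact: etrans (sum_enum_val (fun t => _)) (frob_dual_l fB u).
exact: etrans (sum_enum_val (fun t => _)) (frob_dual_r fB u).
Qed.

End FrobeniusEndomorphisms.

Theorem mainTheorem15 (A : pzRingType) (B : {pred A})
  (hB : subring_closed B)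
  (hfrob : frobenius_ext_surj +%R *%R 0 (fun _ : A => True) (fun a : A => a \in B))
  (P : lmodType A^c) (hP : progenerator P) :
  frobenius_ext (@endo_add A P) (@endo_mul A P) (@endo_zero A P)
    (@End_over A P (fun a : A => a \in B)) (@End_over A P (fun _ : A => True)).
Proof.
case: hfrob => _ [E [[EB ED EBl EBr [n [x [y [_ dual]]]]] _]].
case: hP => /fg_projective_dual_basis [m [pj [phi [phi_form dual_P]]]].
move=> /generator_trace_one [L [q [psi [psi_form trace1]]]].
have hE := End_frobenius_system (EB^~ I) (fun a b => ED a b I I)
  (fun b a Bb => EBl b a Bb I) (fun a b Bb => EBr a b I Bb)
  (fun a => (dual a I).1) (fun a => (dual a I).2) phi_form psi_form dual_P trace1.
split; [exact: End_fgproj_of_frobenius_system hE | by exists (frob_endo x y (P:=P))].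
Qed.
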